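(* Let $K\subset\mathbb{C}$ be a subfield. Let $\mathcal{A}=\{H_1,\dots,H_n\}$ be an arrangement of distinct lines in $\mathbb{P}^2_{\mathbb{C}}$ with $|H_n\cap\operatorname{mult}(\mathcal{A})|\le 2$, and let $\mathcal{A}'=\{H_1,\dots,H_{n-1}\}$, $I=I(\mathcal{A})$, $I'=I(\mathcal{A}')$. If the set $\mathcal{R}(I')(K)$ of $K$-valued points is Zariski dense in $\mathcal{R}(I')(\mathbb{C})$, then $\mathcal{R}(I)(K)$ is Zariski dense in $\mathcal{R}(I)(\mathbb{C})$; in particular $\mathcal{R}(I)(K)\ne\emptyset$, i.e. $I$ is realizable over $K$. Moreover, for every inductively connected arrangement $\mathcal{A}$, the incidence $I(\mathcal{A})$ is realizable over $\mathbb{Q}$.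
   Context: Lines $H_i=\{a_ix+b_iy+c_iz=0\}$ are identified with points $(a_i:b_i:c_i)\in(\mathbb{P}^2)^*$; $\det(H_i,H_j,H_k)$ is the determinant of their coefficient rows. $I(\mathcal{A})=\{\{i,j,k\}: H_i\cap H_j\cap H_k\ne\emptyset\}$. $\mathcal{R}(I)=\{(H_1,\dots,H_n)\in((\mathbb{P}^2)^* )^n: H_i\ne H_j\ (i\ne j),\ \det(H_i,H_j,H_k)=0 \text{ iff } \{i,j,k\}\in I\}$; $\mathcal{R}(I)(K)$ denotes its points all of whose lines have coordinates in $K$; $I$ is realizable over $K$ if $\mathcal{R}(I)(K)\neq\emptyset$ (equivalently, some arrangement with defining linear forms over $K$ has incidence $I$). $\operatorname{mult}(\mathcal{A})$ is the set of points on at least three lines of $\mathcal{A}$. $\mathcal{A}$ is inductively connected (i.c.) if its lines can be numbered $H_1,\dots,H_n$ so that $|H_t\cap\operatorname{mult}(\{H_1,\dots,H_t\})|\le 2$ for all $t$. *)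

From HB Require Import structures.
From mathcomp Require Import all_boot all_order all_algebra all_fingroup.
Set Implicit Arguments. Unset Strict Implicit. Unset Printing Implicit Defensive.
Import Order.TTheory GRing.Theory Num.Theory.
Local Open Scope ring_scope.

Section Defs.
Variable C : numClosedFieldType.

(* A line a x + b y + c z = 0 (or a point) is given by a coordinate row vector
   in C^3; a nonzero one represents a point of P^2 (or of the dual P^2). *)
Definition vec3 := 'rV[C]_3.

Definition proportional (a b : vec3) : Prop := exists l : C, a = l *: b.

Definition onLine (p H : vec3) : Prop := \sum_(s < 3) H 0 s * p 0 s = 0.

Definition det3 (a b c : vec3) : C :=
  \det (\matrix_(r < 3, s < 3)
          (if (r : nat) == 0%N then a 0 s else if (r : nat) == 1%N then b 0 s
           else c 0 s)).

Definition arrangement (m : nat) (A : 'I_m -> vec3) : Prop :=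
  (forall i, A i != 0) /\ (forall i j, i != j -> ~ proportional (A i) (A j)).

Definition incid (m : nat) (A : 'I_m -> vec3) (S : {set 'I_m}) : Prop :=
  #|S| = 3%N /\ exists p : vec3, p != 0 /\ forall i, i \in S -> onLine p (A i).

(* the cone over R(I)(C) in (C^3 \ 0)^m *)
Definition RC (m : nat) (I : {set 'I_m} -> Prop) (v : 'I_m -> vec3) : Prop :=
  (forall i, v i != 0) /\
  (forall i j, i != j -> ~ proportional (v i) (v j)) /\
  (forall i j k, i != j -> j != k -> i != k ->
     (det3 (v i) (v j) (v k) = 0 <-> I [set i; j; k])).

Definition is_subfield (K : C -> Prop) : Prop :=
  K 1 /\ (forall x y, K x -> K y -> K (x - y)) /\
  (forall x y, K x -> K y -> y != 0 -> K (x / y)).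

Definition ratK (x : C) : Prop := exists q : rat, x = ratr q.

Definition RK (K : C -> Prop) (m : nat) (I : {set 'I_m} -> Prop)
    (v : 'I_m -> vec3) : Prop :=
  RC I v /\ forall i, exists (l : C) (w : vec3), v i = l *: w /\ forall s, K (w 0 s).

Inductive mpoly (V : Type) : Type :=
| PVar of V
| PConst of C
| PAdd of mpoly V & mpoly V
| PMul of mpoly V & mpoly V
| POpp of mpoly V.

Fixpoint peval (V : Type) (e : V -> C) (p : mpoly V) : C :=
  match p with
  | PVar x => e x
  | PConst c => c
  | PAdd p q => peval e p + peval e q
  | PMul p q => peval e p * peval e q
  | POpp p => - peval e p
  end.

Definition coords (m : nat) (v : 'I_m -> vec3) (x : 'I_m * 'I_3) : C :=
  v x.1 0 x.2.

Definition zdense (m : nat) (S X : ('I_m -> vec3) -> Prop) : Prop :=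
  forall p : mpoly ('I_m * 'I_3),
    (forall v, S v -> peval (coords v) p = 0) ->
    forall v, X v -> peval (coords v) p = 0.

Definition multPt (m : nat) (A : 'I_m -> vec3) (T : {set 'I_m}) (p : vec3) : Prop :=
  p != 0 /\ exists i j k, [/\ i \in T, j \in T & k \in T] /\ [/\ i != j, j != k & i != k] /\
    onLine p (A i) /\ onLine p (A j) /\ onLine p (A k).

Definition atMost2Mult (m : nat) (A : 'I_m -> vec3) (T : {set 'I_m}) (h : 'I_m) : Prop :=
  ~ exists p1 p2 p3 : vec3,
      [/\ onLine p1 (A h), onLine p2 (A h) & onLine p3 (A h)] /\
      [/\ multPt A T p1, multPt A T p2 & multPt A T p3] /\
      [/\ ~ proportional p1 p2, ~ proportional p2 p3 & ~ proportional p1 p3].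

Definition ind_connected (m : nat) (A : 'I_m -> vec3) : Prop :=
  exists sigma : 'S_m, forall t : 'I_m,
    atMost2Mult A [set sigma u | u : 'I_m & (u <= t)%N] (sigma t).

End Defs.

From HB Require Import structures.
From mathcomp Require Import all_boot all_order all_algebra all_fingroup ring.
From Stdlib Require Import Classical FunctionalExtensionality.
Import Order.TTheory GRing.Theory Num.Theory.
Local Open Scope ring_scope.
Set Implicit Arguments. Unset Strict Implicit. Unset Printing Implicit Defensive.

(* Fix the lines v' of A' and let q range over C^3.  The admissible positions of
   the last line form a linear family L v' q: all lines if H_n contains no point
   of mult(A), the pencil through P if it contains one such point P, and the line
   PQ if it contains two, P and Q.  L is polynomial in (v', q), maps K-rational
   data to K-rational lines, and reaches every realization of I.  If p vanishes
   on R(I)(K), then p(v', L v' q) times a polynomial excluding the degenerate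
   positions vanishes on R(I')(K) x K^3, hence (K contains the integers) on
   R(I')(K) x C^3, hence (density) on R(I')(C) x C^3, and so p vanishes on
   R(I)(C).  Induction along an inductively connected numbering, starting from
   the empty arrangement, gives realizability over Q. *)

Section Vectors.
Variable C : numClosedFieldType.
Local Notation vec := (vec3 C).
Implicit Types (a b c h x y z P q : vec) (l : C).

Definition ent x (k : nat) : C := x 0 (inord k).

Lemma ent_val x (s : 'I_3) : x 0 s = ent x s.
Proof. by rewrite /ent inord_val. Qed.

Lemma ord3P (s : 'I_3) : [\/ s = inord 0, s = inord 1 | s = inord 2].
Proof.
by case: s => -[|[|[|//]]] hs; [constructor 1|constructor 2|constructor 3];
  apply: val_inj; rewrite /= inordK.
Qed.

Lemma vec3P x y : ent x 0 = ent y 0 -> ent x 1 = ent y 1 -> ent x 2 = ent y 2 -> x = y.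
Proof. by move=> e0 e1 e2; apply/rowP => s; case: (ord3P s) => ->. Qed.

Definition mk3 (a b c : C) : vec :=
  \row_(s < 3) (if (s : nat) == 0%N then a else if (s : nat) == 1%N then b else c).

Lemma mk3E x : x = mk3 (ent x 0) (ent x 1) (ent x 2).
Proof. by apply: vec3P; rewrite /ent !mxE !inordK. Qed.

Definition dot x y : C := \sum_(s < 3) x 0 s * y 0 s.

Definition cross a b : vec :=
  \row_(s < 3) (if (s : nat) == 0%N then ent a 1 * ent b 2 - ent a 2 * ent b 1
                else if (s : nat) == 1%N then ent a 2 * ent b 0 - ent a 0 * ent b 2
                else ent a 0 * ent b 1 - ent a 1 * ent b 0).

Lemma dotE x y : dot x y = ent x 0 * ent y 0 + ent x 1 * ent y 1 + ent x 2 * ent y 2.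
Proof.
rewrite /dot !big_ord_recl big_ord0 addr0 addrA !ent_val.
by rewrite /= /bump /= ?inordK.
Qed.

Lemma ent_cross0 a b : ent (cross a b) 0 = ent a 1 * ent b 2 - ent a 2 * ent b 1.
Proof. by rewrite /ent mxE inordK. Qed.
Lemma ent_cross1 a b : ent (cross a b) 1 = ent a 2 * ent b 0 - ent a 0 * ent b 2.
Proof. by rewrite /ent mxE inordK. Qed.
Lemma ent_cross2 a b : ent (cross a b) 2 = ent a 0 * ent b 1 - ent a 1 * ent b 0.
Proof. by rewrite /ent mxE inordK. Qed.
Lemma entZ l x k : ent (l *: x) k = l * ent x k.
Proof. by rewrite /ent mxE. Qed.
Lemma entB x y k : ent (x - y) k = ent x k - ent y k.
Proof. by rewrite /ent !mxE. Qed.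
Lemma ent0 k : ent 0 k = 0.
Proof. by rewrite /ent mxE. Qed.
Definition entE := (ent_cross0, ent_cross1, ent_cross2, entZ, entB, ent0).

Lemma det3_dot_cross a b c : det3 a b c = dot c (cross a b).
Proof.
rewrite dotE !entE /det3 (expand_det_row _ 0) !big_ord_recl big_ord0 /cofactor.
rewrite !(expand_det_row _ 0) !big_ord_recl !big_ord0 /cofactor !det_mx11 !mxE !ent_val /=.
ring.
Qed.

Lemma dotC x y : dot x y = dot y x.
Proof. by rewrite !dotE; ring. Qed.
Lemma dotZr x l y : dot x (l *: y) = l * dot x y.
Proof. by rewrite !dotE !entE; ring. Qed.
Lemma dot_crossl a b : dot a (cross a b) = 0.
Proof. by rewrite !dotE !entE; ring. Qed.
Lemma dot_crossr a b : dot b (cross a b) = 0.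
Proof. by rewrite !dotE !entE; ring. Qed.
Lemma cross_cross x y z : cross x (cross y z) = dot x z *: y - dot x y *: z.
Proof. by apply: vec3P; rewrite !dotE !entE; ring. Qed.
Lemma crossZl l a b : cross (l *: a) b = l *: cross a b.
Proof. by apply: vec3P; rewrite !entE; ring. Qed.
Lemma crossZr l a b : cross a (l *: b) = l *: cross a b.
Proof. by apply: vec3P; rewrite !entE; ring. Qed.
Lemma crossxx a : cross a a = 0.
Proof. by apply: vec3P; rewrite !entE; ring. Qed.
Lemma cross_anti a b : cross a b = - cross b a.
Proof. by apply: vec3P; rewrite -scaleN1r !entE; ring. Qed.

Lemma dot_delta (s : 'I_3) x : dot (delta_mx 0 s) x = x 0 s.
Proof.
rewrite /dot (bigD1 s) //= big1 => [|t /negbTE ts]; last by rewrite mxE ts mul0r.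
by rewrite mxE !eqxx mul1r addr0.
Qed.

Definition nz_entry x : 'I_3 := odflt ord0 [pick s | x 0 s != 0].

Lemma nz_entryP x : x != 0 -> x 0 (nz_entry x) != 0.
Proof.
move=> x0; rewrite /nz_entry; case: pickP => [s //|x00] /=.
by case/eqP: x0; apply/rowP => s; rewrite mxE; apply/eqP; rewrite -[_ == _]negbK x00.
Qed.

Lemma exists_dot_neq0 x : x != 0 -> exists e, dot e x != 0.
Proof. by move/nz_entryP => xs; exists (delta_mx 0 (nz_entry x)); rewrite dot_delta. Qed.

Lemma cross_eq0_proportional a b : b != 0 -> cross a b = 0 -> proportional a b.
Proof.
move=> /exists_dot_neq0 [e eb] ab0; exists (dot e a / dot e b).
apply: (scalerI eb); rewrite scalerA mulrC divfK //.
by apply/eqP; rewrite -subr_eq0 -cross_cross ab0; apply/eqP/vec3P; rewrite !entE; ring.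
Qed.

Lemma proportional_cross_eq0 a b : proportional a b -> cross a b = 0.
Proof. by case=> l ->; rewrite crossZl crossxx scaler0. Qed.

Lemma cross_neq0 a b : b != 0 -> ~ proportional a b -> cross a b != 0.
Proof. by move=> b0 nab; apply/eqP => /(cross_eq0_proportional b0). Qed.

Lemma proportional_perp x y z : proportional x y -> dot z y = 0 -> dot z x = 0.
Proof. by case=> l ->; rewrite dotZr => ->; rewrite mulr0. Qed.

Lemma perp_cross P h : P != 0 -> dot h P = 0 -> exists q, h = cross P q.
Proof.
move=> /exists_dot_neq0 [e eP] hP; rewrite dotC in eP.
exists ((dot P e)^-1 *: cross h e).
by rewrite crossZr cross_cross (dotC P h) hP scale0r subr0 scalerA mulVf ?scale1r.
Qed.

Definition concurrent a b c : Prop :=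
  exists p, p != 0 /\ [/\ onLine p a, onLine p b & onLine p c].

Lemma onLineE p H : onLine p H = (dot H p = 0).
Proof. by []. Qed.

Lemma det3_eq0P a b c : det3 a b c = 0 <-> concurrent a b c.
Proof.
rewrite /det3 -det_tr; set M := (\matrix_(r, s) _)^T.
have dotM p (r : 'I_3) : (p *m M) 0 r =
    dot (if (r : nat) == 0%N then a else if (r : nat) == 1%N then b else c) p.
  rewrite !mxE /dot; apply: eq_bigr => s _; rewrite !mxE mulrC.
  by case: (nat_of_ord r == 0%N); case: (nat_of_ord r == 1%N).
split=> [/eqP/det0P [p p0 pM] | [p [p0 [pa pb pc]]]].
  exists p; split=> //; rewrite /onLine -!/(dot _ p).
  by have := dotM p (inord 0); have := dotM p (inord 1); have := dotM p (inord 2);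
    rewrite pM !mxE !inordK.
apply/eqP/det0P; exists p => //; apply/rowP => r; rewrite dotM mxE.
by case: (ord3P r) => ->; rewrite inordK.
Qed.

Lemma concurrent_dot_cross a b c : concurrent a b c <-> dot c (cross a b) = 0.
Proof. by rewrite -det3_dot_cross det3_eq0P. Qed.

Lemma concurrent_swap a b c : concurrent a b c <-> concurrent b a c.
Proof. by split=> -[p [p0 [? ? ?]]]; exists p. Qed.

Lemma concurrent_rot a b c : concurrent a b c <-> concurrent b c a.
Proof. by split=> -[p [p0 [? ? ?]]]; exists p. Qed.

Lemma concurrent_aab a b : concurrent a a b.
Proof. by apply/concurrent_dot_cross; rewrite crossxx dotE !ent0 !mulr0 !addr0. Qed.

Lemma card3 m (i j k : 'I_m) : i != j -> j != k -> i != k -> #|[set i; j; k]| = 3%N.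
Proof.
move=> ij jk ik; rewrite setUC cardsU1 cards2 !inE.
by rewrite ij eq_sym (negbTE ik) eq_sym (negbTE jk).
Qed.

Lemma incid_concurrent m (A : 'I_m -> vec) i j k : i != j -> j != k -> i != k ->
  incid A [set i; j; k] <-> concurrent (A i) (A j) (A k).
Proof.
move=> ij jk ik; split=> [[_ [p [p0 pA]]] | [p [p0 [pi pj pk]]]].
  by exists p; split=> //; split; apply: pA; rewrite !inE eqxx ?orbT.
split; first exact: card3.
by exists p; split=> // x; rewrite !inE => /orP [/orP [] | ] /eqP ->.
Qed.

Definition realizes m (A v : 'I_m -> vec) : Prop :=
  [/\ forall i, v i != 0,
      forall i j, i != j -> ~ proportional (v i) (v j) &
      forall i j k, i != j -> j != k -> i != k ->
        concurrent (v i) (v j) (v k) <-> concurrent (A i) (A j) (A k)].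

Lemma RC_realizes m (A v : 'I_m -> vec) : RC (incid A) v <-> realizes A v.
Proof.
split=> [[v0 [vnp vc]] | [v0 vnp vc]].
  split=> // i j k ij jk ik.
  by rewrite -(incid_concurrent A ij jk ik) -(det3_eq0P (v i)); apply: vc.
do 2 split=> //; move=> i j k ij jk ik.
by rewrite (det3_eq0P (v i)) (incid_concurrent A ij jk ik); apply: vc.
Qed.

Lemma arrangement_realizes m (A : 'I_m -> vec) : arrangement A -> realizes A A.
Proof. by case=> A0 Anp; split. Qed.

Lemma realizes_reindex p m (A v : 'I_m -> vec) (g : 'I_p -> 'I_m) : injective g ->
  realizes A v -> realizes (A \o g) (v \o g).
Proof.
move=> gI [v0 vnp vc]; split=> [i | i j ij | i j k ij jk ik] /=;
  [exact: v0 | apply: vnp | apply: vc]; by rewrite ?(inj_eq gI).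
Qed.

Lemma realizes_concurrent m (A v : 'I_m -> vec) i j k : realizes A v -> i != j ->
  concurrent (v i) (v j) (v k) <-> concurrent (A i) (A j) (A k).
Proof.
move=> [_ _ vc] ij.
have aba y z : concurrent y z y by apply/(concurrent_rot y y z)/concurrent_aab.
have abb y z : concurrent y z z by apply/(concurrent_rot z y z)/aba.
have [-> | ki] := eqVneq k i; first by split=> _; apply: aba.
have [-> | kj] := eqVneq k j; first by split=> _; apply: abb.
by apply: vc; rewrite // eq_sym.
Qed.

Lemma realizes_cross_neq0 m (B v : 'I_m -> vec) (i j : 'I_m) : realizes B v -> i != j ->
  cross (v i) (v j) != 0.
Proof. by move=> [v0 vnp _] ij; apply: cross_neq0 => //; apply: vnp. Qed.
End Vectors.

Section Configurations.
Variable C : numClosedFieldType.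
Local Notation vec := (vec3 C).

Section OneMoreLine.
Variable n : nat.
Local Notation N := (@ord_max n).

Definition restr (u : 'I_n.+1 -> vec) : 'I_n -> vec := fun i => u (lift N i).

Definition ext (v : 'I_n -> vec) h : 'I_n.+1 -> vec :=
  fun x : 'I_n.+1 => if unlift N x is Some i then v i else h.

Lemma ext_lift v h i : ext v h (lift N i) = v i.
Proof. by rewrite /ext liftK. Qed.

Lemma ext_max v h : ext v h N = h.
Proof. by rewrite /ext unlift_none. Qed.

Lemma restr_ext v h : restr (ext v h) = v.
Proof. by apply: functional_extensionality => i; rewrite /restr ext_lift. Qed.

Lemma ext_restr (u : 'I_n.+1 -> vec) : ext (restr u) (u N) = u.
Proof.
by apply: functional_extensionality => x; rewrite /ext; case: unliftP => [i|] ->.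
Qed.

Lemma restr_widen (u : 'I_n.+1 -> vec) : restr u = u \o widen_ord (leqnSn n).
Proof.
apply: functional_extensionality => i; congr u; apply: val_inj.
by rewrite /= /bump leqNgt ltn_ord.
Qed.

Lemma lift_max_neq (i : 'I_n) : lift N i != N.
Proof. by rewrite eq_sym neq_lift. Qed.

Variable A : 'I_n.+1 -> vec.

Lemma realizes_restr v : realizes A v -> realizes (restr A) (restr v).
Proof. exact/realizes_reindex/lift_inj. Qed.

Lemma realizes_concurrent_max v i j : realizes A v -> i != j ->
  concurrent (v (lift N i)) (v (lift N j)) (v N) <->
  concurrent (A (lift N i)) (A (lift N j)) (A N).
Proof.
by move=> [_ _ vc] ij; apply: vc; rewrite ?(inj_eq (@lift_inj _ N)) ?lift_max_neq.
Qed.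

Lemma realizes_ext v h : realizes (restr A) v -> h != 0 ->
  (forall i, cross h (v i) != 0) ->
  (forall i j, i != j ->
     concurrent (v i) (v j) h <-> concurrent (A (lift N i)) (A (lift N j)) (A N)) ->
  realizes A (ext v h).
Proof.
move=> [v0 vnp vc] h0 hv hc.
have liftN (i j : 'I_n) : lift N i != lift N j -> i != j by apply: contraNneq => ->.
split=> [x | x y | x y z].
- by case: (unliftP N x) => [i|] ->; rewrite ?ext_lift ?ext_max.
- case: (unliftP N x) => [i|] ->; case: (unliftP N y) => [j|] ->;
    rewrite ?ext_lift ?ext_max ?eqxx //.
  + by move=> /liftN; apply: vnp.
  + by move=> _ /proportional_cross_eq0/eqP; rewrite cross_anti oppr_eq0; apply/negP.
  + by move=> _ /proportional_cross_eq0/eqP; apply/negP.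
case: (unliftP N x) => [i|] ->; case: (unliftP N y) => [j|] ->;
  case: (unliftP N z) => [k|] ->; rewrite ?ext_lift ?ext_max ?eqxx //.
- by move=> /liftN ij /liftN jk /liftN ik; apply: vc.
- by move=> /liftN ij _ _; apply: hc.
- move=> _ _ /liftN ik.
  rewrite -(concurrent_rot (v k)) -(concurrent_rot (A (lift N k))).
  by rewrite (concurrent_swap (v k)) (concurrent_swap (A (lift N k))); apply: hc.
- move=> _ /liftN jk _.
  by rewrite (concurrent_rot h) (concurrent_rot (A N)); apply: hc.
Qed.
End OneMoreLine.

Definition polyfun (f : C -> C) : Prop := exists P : {poly C}, forall t, f t = P.[t].

Lemma polyfunC c : polyfun (fun _ => c).
Proof. by exists c%:P => t; rewrite hornerC. Qed.

Lemma polyfunX : polyfun id.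
Proof. by exists 'X => t; rewrite hornerX. Qed.

Lemma polyfun_peval V (E : C -> V -> C) (p : mpoly C V) :
  (forall x, polyfun (E^~ x)) -> polyfun (fun t => peval (E t) p).
Proof.
move=> EP; elim: p => /= [x | c | p [P eP] q [Q eQ] | p [P eP] q [Q eQ] | p [P eP]].
- exact: EP.
- exact: polyfunC.
- by exists (P + Q) => t; rewrite hornerD eP eQ.
- by exists (P * Q) => t; rewrite hornerM eP eQ.
- by exists (- P) => t; rewrite hornerN eP.
Qed.

Lemma polyfun_nat0 f : polyfun f -> (forall m : nat, f m%:R = 0) -> forall t, f t = 0.
Proof.
move=> [P eP] f0; suff P0 : P = 0 by move=> t; rewrite eP P0 horner0.
apply/eqP; apply: contraT => P0.
have := max_poly_roots P0 (rs := [seq (m%:R : C) | m <- iota 0 (size P)]).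
rewrite size_map size_iota ltnn; apply.
  by apply/allP => _ /mapP [m _ ->]; rewrite /root -eP f0.
by rewrite map_inj_uniq ?iota_uniq // => i j /eqP; rewrite eqr_nat => /eqP.
Qed.

Lemma polyfun3_nat0 (f : C -> C -> C -> C) :
  (forall a b, polyfun (f a b)) -> (forall a c, polyfun (f a ^~ c)) ->
  (forall b c, polyfun (fun t => f t b c)) ->
  (forall i j k : nat, f i%:R j%:R k%:R = 0) -> forall a b c, f a b c = 0.
Proof.
move=> f3 f2 f1 f0.
have f0' (i j : nat) c : f i%:R j%:R c = 0 by apply: polyfun_nat0 => // k; apply: f0.
have f0'' (i : nat) b c : f i%:R b c = 0.
  by apply: (polyfun_nat0 (f := f i%:R ^~ c)) => // j; apply: f0'.
by move=> a b c; apply: (polyfun_nat0 (f := fun t => f t b c)) => // i; apply: f0''.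
Qed.

Definition polycfg m (f : ('I_m -> vec) -> C) : Prop :=
  exists p : mpoly C ('I_m * 'I_3), forall u, f u = peval (coords u) p.

Definition polyvec m (h : ('I_m -> vec) -> vec) : Prop :=
  forall s, polycfg (fun u => h u 0 s).

Section PolynomialMaps.
Variable m : nat.
Implicit Types (f g : ('I_m -> vec) -> C) (h : ('I_m -> vec) -> vec) (i : 'I_m).

Lemma polycfg_ext f g : (forall u, f u = g u) -> polycfg g -> polycfg f.
Proof. by move=> fg [p gp]; exists p => u; rewrite fg. Qed.

Lemma polycfgC c : polycfg (fun _ : 'I_m -> vec => c).
Proof. by exists (PConst _ c). Qed.

Lemma polycfg_entry i s : polycfg (fun u => u i 0 s).
Proof. by exists (PVar C (i, s)). Qed.

Lemma polycfgD f g : polycfg f -> polycfg g -> polycfg (fun u => f u + g u).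
Proof. by move=> [p fp] [q gq]; exists (PAdd p q) => u /=; rewrite fp gq. Qed.

Lemma polycfgM f g : polycfg f -> polycfg g -> polycfg (fun u => f u * g u).
Proof. by move=> [p fp] [q gq]; exists (PMul p q) => u /=; rewrite fp gq. Qed.

Lemma polycfgN f : polycfg f -> polycfg (fun u => - f u).
Proof. by move=> [p fp]; exists (POpp p) => u /=; rewrite fp. Qed.

Lemma polycfgB f g : polycfg f -> polycfg g -> polycfg (fun u => f u - g u).
Proof. by move=> fP gP; apply/polycfgD/polycfgN. Qed.

Lemma polycfg_prod (T : finType) (P : pred T) (F : T -> ('I_m -> vec) -> C) :
  (forall x, polycfg (F x)) -> polycfg (fun u => \prod_(x | P x) F x u).
Proof.
move=> FP; rewrite /polycfg; elim: (index_enum T) => [|x r [p rp]].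
  by exists (PConst _ 1) => u; rewrite big_nil.
have [q xq] := FP x; case: (boolP (P x)) => Px.
  by exists (PMul q p) => u /=; rewrite big_cons Px xq rp.
by exists p => u; rewrite big_cons (negbTE Px).
Qed.

Lemma polycfg_comp k (f : ('I_k -> vec) -> C) (g : ('I_m -> vec) -> 'I_k -> vec) :
  polycfg f -> (forall j : 'I_k, polyvec (g^~ j)) -> polycfg (fun u => f (g u)).
Proof.
move=> [p fp] gP; apply: (polycfg_ext (fun u => fp (g u))); clear fp.
elim: p => [[j s] | c | p pP q qP | p pP q qP | p pP] /=.
- exact: gP.
- exact: polycfgC.
- exact: polycfgD.
- exact: polycfgM.
- exact: polycfgN.
Qed.

Lemma polycfg_univariate (f : ('I_m -> vec) -> C) (g : C -> 'I_m -> vec) :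
  polycfg f -> (forall i s, polyfun (fun t => g t i 0 s)) -> polyfun (fun t => f (g t)).
Proof.
move=> [p fp] gP; have [P eP] := polyfun_peval (E := fun t => coords (g t)) p (fun x => gP x.1 x.2).
by exists P => t; rewrite fp eP.
Qed.

Lemma polyvec_line i : polyvec (fun u => u i).
Proof. exact: polycfg_entry. Qed.

Lemma polycfg_ent h k : polyvec h -> polycfg (fun u => ent (h u) k).
Proof. by move=> hP; apply: hP. Qed.

Lemma polyvecZ f h : polycfg f -> polyvec h -> polyvec (fun u => f u *: h u).
Proof. by move=> fP hP s; apply: (polycfg_ext (fun u => mxE _ _ _ _)); apply: polycfgM. Qed.

Lemma polyvec_cross h1 h2 : polyvec h1 -> polyvec h2 -> polyvec (fun u => cross (h1 u) (h2 u)).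
Proof.
move=> h1P h2P s; apply: (polycfg_ext (fun u => mxE _ _ _ _)) => /=.
by case: (nat_of_ord s == 0%N); [|case: (nat_of_ord s == 1%N)];
  apply: polycfgB; apply: polycfgM; apply: polycfg_ent.
Qed.

Lemma polycfg_dot h1 h2 : polyvec h1 -> polyvec h2 -> polycfg (fun u => dot (h1 u) (h2 u)).
Proof.
move=> h1P h2P; apply: (polycfg_ext (fun u => dotE _ _)).
by do 2 (try apply: polycfgD); apply: polycfgM; apply: polycfg_ent.
Qed.

Lemma polycfg_det3 h1 h2 h3 : polyvec h1 -> polyvec h2 -> polyvec h3 ->
  polycfg (fun u => det3 (h1 u) (h2 u) (h3 u)).
Proof.
move=> h1P h2P h3P; apply: (polycfg_ext (fun u => det3_dot_cross _ _ _)).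
exact/polycfg_dot/polyvec_cross.
Qed.

Lemma zdense_polycfg (S X : ('I_m -> vec) -> Prop) f : zdense S X -> polycfg f ->
  (forall u, S u -> f u = 0) -> forall u, X u -> f u = 0.
Proof. by move=> SX [p fp] f0 u Xu; rewrite fp; apply: SX => // w /f0; rewrite fp. Qed.

Lemma zdense_nonempty (S X : ('I_m -> vec) -> Prop) v : zdense S X -> X v -> exists u, S u.
Proof.
move=> SX Xv; apply: NNPP => noS.
have /eqP : (1 : C) = 0.
  by apply: (zdense_polycfg SX (polycfgC 1)) Xv => u Su; case: noS; exists u.
by rewrite oner_eq0.
Qed.
End PolynomialMaps.

Section Subfield.
Variable K : C -> Prop.
Hypothesis subK : is_subfield K.

Lemma subfield1 : K 1.
Proof. by case: subK. Qed.
Lemma subfieldB x y : K x -> K y -> K (x - y).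
Proof. by case: subK => _ [+ _]; apply. Qed.
Lemma subfield0 : K 0.
Proof. by rewrite -(subrr 1); apply: subfieldB; apply: subfield1. Qed.
Lemma subfieldN x : K x -> K (- x).
Proof. by move=> Kx; rewrite -sub0r; apply: subfieldB subfield0 Kx. Qed.
Lemma subfieldD x y : K x -> K y -> K (x + y).
Proof. by move=> Kx Ky; rewrite -[y]opprK; apply/subfieldB/subfieldN. Qed.

Lemma subfieldM x y : K x -> K y -> K (x * y).
Proof.
case: subK => _ [_ Kdiv] Kx Ky.
have [-> | y0] := eqVneq y 0; first by rewrite mulr0; apply: subfield0.
have Ky' : K (1 / y) by apply: Kdiv => //; apply: subfield1.
have -> : x * y = x / (1 / y) by rewrite div1r invrK.
by apply: Kdiv; rewrite // div1r invr_eq0.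
Qed.

Lemma subfield_nat (k : nat) : K k%:R.
Proof.
elim: k => [|k Kk]; first exact: subfield0.
by rewrite -addn1 natrD; apply: subfieldD Kk subfield1.
Qed.

Definition Kvec (x : vec) : Prop := forall s, K (x 0 s).

Definition Kline (x : vec) : Prop := exists l (w : vec), x = l *: w /\ Kvec w.

Lemma Kvec_line x : Kvec x -> Kline x.
Proof. by exists 1, x; rewrite scale1r. Qed.

Lemma KlineZ l x : Kline x -> Kline (l *: x).
Proof. by case=> l' [w [-> Kw]]; exists (l * l'), w; rewrite scalerA. Qed.

Lemma Kline_cross a b : Kline a -> Kline b -> Kline (cross a b).
Proof.
move=> [l [w [-> Kw]]] [l' [w' [-> Kw']]]; exists (l * l'), (cross w w').
rewrite crossZl crossZr scalerA; split=> // s; rewrite mxE.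
by case: (nat_of_ord s == 0%N); [|case: (nat_of_ord s == 1%N)];
  apply: subfieldB; apply: subfieldM; apply: Kw || apply: Kw'.
Qed.
End Subfield.

Lemma polyfun_mk3 (fa fb fc : C -> C) s : polyfun fa -> polyfun fb -> polyfun fc ->
  polyfun (fun t => mk3 (fa t) (fb t) (fc t) 0 s).
Proof.
move=> [Pa ea] [Pb eb] [Pc ec].
exists (if (s : nat) == 0%N then Pa else if (s : nat) == 1%N then Pb else Pc) => t.
by rewrite mxE; case: (nat_of_ord s == 0%N); [|case: (nat_of_ord s == 1%N)].
Qed.

Lemma zdense_ext_Kvec K n (S X : ('I_n -> vec) -> Prop) (F : ('I_n.+1 -> vec) -> C) :
  is_subfield K -> zdense S X -> polycfg F ->
  (forall v q, S v -> Kvec K q -> F (ext v q) = 0) ->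
  forall v q, X v -> F (ext v q) = 0.
Proof.
move=> subK SX FP F0.
have polyext (v : 'I_n -> vec) (g : C -> vec) x s : (forall s, polyfun (fun t => g t 0 s)) ->
    polyfun (fun t => ext v (g t) x 0 s).
  by move=> gP; rewrite /ext; case: (unlift _ x) => [i|]; [apply: polyfunC | apply: gP].
have FS v q : S v -> F (ext v q) = 0.
  move=> Sv; rewrite (mk3E q).
  apply: (polyfun3_nat0 (f := fun a b c => F (ext v (mk3 a b c)))) => [a b | a c | b c | i j k].
  1-3: by apply: polycfg_univariate => // x s; apply: polyext => s';
         apply: polyfun_mk3; apply: polyfunC || apply: polyfunX.
  apply: F0 => // s; rewrite mxE.
  by case: (nat_of_ord s == 0%N); [|case: (nat_of_ord s == 1%N)]; apply: subfield_nat.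
move=> v q Xv; apply: (zdense_polycfg (f := fun w => F (ext w q)) SX) Xv => [|w Sw]; last exact: FS.
apply: polycfg_comp => // x s; rewrite /ext; case: (unlift _ x) => [i|].
  exact: polycfg_entry.
exact: polycfgC.
Qed.

Section AddOneLine.
Variable K : C -> Prop.
Hypothesis subK : is_subfield K.
Variable n : nat.
Local Notation N := (@ord_max n).
Variable A : 'I_n.+1 -> vec.
Local Notation A' := (restr A).

Definition required (i j : 'I_n) : Prop := i != j /\ concurrent (A' i) (A' j) (A N).

Definition good_param (L : ('I_n -> vec) -> vec -> vec) : Prop :=
  [/\ polyvec (fun u => L (restr u) (u N)),
      forall v q, realizes A' v -> forall i j, required i j ->
        concurrent (v i) (v j) (L v q),
      forall v q, (forall i, Kline K (v i)) -> Kvec K q -> Kline K (L v q) &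
      forall v, realizes A v -> exists q, L (restr v) q = v N].

Lemma realizes_ext_param L v q : good_param L -> realizes A' v ->
  L v q != 0 -> (forall i, cross (L v q) (v i) != 0) ->
  (forall i j, i != j -> ~ concurrent (A' i) (A' j) (A N) -> ~ concurrent (v i) (v j) (L v q)) ->
  realizes A (ext v (L v q)).
Proof.
move=> [_ Lc _ _] vA' L0 Lv Lnc; apply: realizes_ext => // i j ij.
split=> [c | cA]; last exact: Lc.
by apply: NNPP => ncA; exact: Lnc ij ncA c.
Qed.

Lemma nondeg_poly L v q0 : good_param L -> realizes A v -> L (restr v) q0 = v N ->
  exists2 r : ('I_n.+1 -> vec) -> C, polycfg r &
    r (ext (restr v) q0) != 0 /\
    forall u, r u != 0 -> let h := L (restr u) (u N) in
      [/\ h != 0, forall i, cross h (restr u i) != 0 &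
          forall i j, i != j -> ~ concurrent (A' i) (A' j) (A N) ->
            ~ concurrent (restr u i) (restr u j) h].
Proof.
move=> [LP _ _ _] vA q0v; have [v0 vnp _] := vA.
pose Lu u := L (restr u) (u N).
pose r1 u : C := Lu u 0 (nz_entry (v N)).
pose r2 u : C := \prod_i cross (Lu u) (u (lift N i)) 0 (nz_entry (cross (v N) (v (lift N i)))).
pose r3 u : C := \prod_(ij : 'I_n * 'I_n | det3 (A' ij.1) (A' ij.2) (A N) != 0)
  det3 (u (lift N ij.1)) (u (lift N ij.2)) (Lu u).
exists (fun u => r1 u * r2 u * r3 u).
  apply: polycfgM; [apply: polycfgM|]; first exact: LP.
    by apply: polycfg_prod => i; apply: polyvec_cross => //; apply: polyvec_line.
  by apply: polycfg_prod => ij; apply: polycfg_det3 => //; apply: polyvec_line.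
have Lu0 : Lu (ext (restr v) q0) = v N by rewrite /Lu restr_ext ext_max.
have crossN0 i : cross (v N) (v (lift N i)) != 0.
  by apply: cross_neq0 => //; apply: vnp; rewrite eq_sym lift_max_neq.
split.
  rewrite !mulf_neq0 //; first by rewrite /r1 Lu0 nz_entryP.
    by rewrite /r2; apply/prodf_neq0 => i _; rewrite Lu0 ext_lift /restr nz_entryP.
  rewrite /r3; apply/prodf_neq0 => -[i j] /= nA; rewrite Lu0 !ext_lift.
  have ij : i != j by apply: contraNneq nA => ->; apply/eqP/det3_eq0P/concurrent_aab.
  apply/eqP => /det3_eq0P /(realizes_concurrent_max vA ij) cA.
  by move: nA; rewrite (proj2 (det3_eq0P _ _ _) cA) eqxx.
move=> u; rewrite !mulf_eq0 !negb_or => /andP [/andP [r10 r20] r30]; split.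
- by apply: contraNneq r10; rewrite /r1 /Lu => ->; rewrite mxE.
- move=> i; move/prodf_neq0: r20 => /(_ i isT).
  by apply: contraNneq; rewrite /Lu => ->; rewrite mxE.
- move=> i j ij ncA; move/prodf_neq0: r30 => /(_ (i, j)) /=.
  have -> : det3 (A' i) (A' j) (A N) != 0 by apply/eqP => /det3_eq0P.
  by move=> /(_ isT) d0 /det3_eq0P; apply/eqP.
Qed.

Lemma zdense_good_param L : good_param L ->
  zdense (RK K (incid A')) (RC (incid A')) -> zdense (RK K (incid A)) (RC (incid A)).
Proof.
move=> Lgood dense p p0 v /RC_realizes vA.
have [LP _ LK Lsurj] := Lgood.
have [q0 q0v] := Lsurj v vA.
have [r rP [r0 rnd]] := nondeg_poly Lgood vA q0v.
pose F u := peval (coords (ext (restr u) (L (restr u) (u N)))) p * r u.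
have FP : polycfg F.
  apply: polycfgM => //; apply: (polycfg_comp (f := fun w => peval (coords w) p)).
    by exists p.
  move=> x; rewrite /ext; case: (unlift _ x) => [i|]; [exact: polyvec_line | exact: LP].
have F0 w q : RK K (incid A') w -> Kvec K q -> F (ext w q) = 0.
  move=> [/RC_realizes wA' Kw] Kq; rewrite /F restr_ext ext_max.
  have [-> | rw] := eqVneq (r (ext w q)) 0; first by rewrite mulr0.
  have [L0 Lw Lnc] := rnd _ rw; rewrite restr_ext ext_max in L0 Lw Lnc.
  rewrite p0 ?mul0r //; split; first by apply/RC_realizes/realizes_ext_param.
  by move=> x; rewrite /ext; case: (unlift _ x) => [i|]; [apply: Kw | apply: LK].
have vA' : RC (incid A') (restr v) by apply/RC_realizes/realizes_restr.
have := zdense_ext_Kvec subK dense FP F0 q0 vA'.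
rewrite /F restr_ext ext_max q0v ext_restr => /eqP.
by rewrite mulf_eq0 (negbTE r0) orbF => /eqP.
Qed.

Definition through (a b x : 'I_n) : Prop := concurrent (A' a) (A' b) (A' x).

Lemma realizes_through v a b x : realizes A' v -> a != b -> through a b x ->
  dot (v x) (cross (v a) (v b)) = 0.
Proof. by move=> vA' ab abx; apply/concurrent_dot_cross/(realizes_concurrent _ vA' ab). Qed.

Lemma good_param_free : (forall i j, ~ required i j) -> good_param (fun _ q => q).
Proof.
move=> noreq; split=> [|v q _ i j /noreq [] | v q _ /Kvec_line // | v _].
  exact: polyvec_line.
by exists (v N).
Qed.

Lemma good_param_pencil a b : required a b ->
  (forall i j, required i j -> through a b i /\ through a b j) ->
  good_param (fun v q => cross (cross (v a) (v b)) q).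
Proof.
move=> [ab abN] pencil; split.
- by apply: polyvec_cross; [apply: polyvec_cross|]; apply: polyvec_line.
- move=> v q vA' i j /pencil [abi abj].
  exists (cross (v a) (v b)); split; first exact: realizes_cross_neq0 vA' ab.
  by split; [apply: realizes_through | apply: realizes_through | rewrite onLineE dotC dot_crossl].
- by move=> v q Kv Kq; apply: (Kline_cross subK _ (Kvec_line Kq)); apply: Kline_cross.
move=> v vA; have vA' := realizes_restr vA.
have [q ->] := perp_cross (realizes_cross_neq0 vA' ab)
  (proj1 (concurrent_dot_cross _ _ _) (proj2 (realizes_concurrent_max vA ab) abN)).
by exists q.
Qed.

Lemma good_param_two_points a b c d : required a b -> required c d ->
  ~ (through a b c /\ through a b d) ->
  (forall i j, required i j ->
     (through a b i /\ through a b j) \/ (through c d i /\ through c d j)) ->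
  good_param (fun v q => ent q 0 *: cross (cross (v a) (v b)) (cross (v c) (v d))).
Proof.
move=> [ab abN] [cd cdN] nabcd two; split.
- apply: polyvecZ; first exact/polycfg_ent/polyvec_line.
  by apply: polyvec_cross; apply: polyvec_cross; apply: polyvec_line.
- move=> v q vA' i j /two [[ti tj] | [ti tj]].
    exists (cross (v a) (v b)); split; first exact: realizes_cross_neq0 vA' ab.
    by split; [apply: realizes_through | apply: realizes_through |
      rewrite onLineE dotC dotZr dot_crossl mulr0].
  exists (cross (v c) (v d)); split; first exact: realizes_cross_neq0 vA' cd.
  by split; [apply: realizes_through | apply: realizes_through |
    rewrite onLineE dotC dotZr dot_crossr mulr0].
- by move=> v q Kv Kq; apply: KlineZ; apply: Kline_cross => //; apply: Kline_cross.
move=> v vA; have vA' := realizes_restr vA.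
set P := cross (restr v a) (restr v b); set Q := cross (restr v c) (restr v d).
have onP : dot (v N) P = 0.
  exact/concurrent_dot_cross/(realizes_concurrent_max vA ab).
have onQ : dot (v N) Q = 0.
  exact/concurrent_dot_cross/(realizes_concurrent_max vA cd).
have PQ0 : cross P Q != 0.
  apply/eqP => /(cross_eq0_proportional (realizes_cross_neq0 vA' cd)) PQ; apply: nabcd.
  by split; apply/(realizes_concurrent _ vA' ab)/concurrent_dot_cross;
    apply: proportional_perp PQ _; rewrite ?dot_crossl ?dot_crossr.
have [l vNl] : proportional (v N) (cross P Q).
  by apply: cross_eq0_proportional PQ0 _; rewrite cross_cross onP onQ !scale0r subrr.
by exists (mk3 l 0 0); rewrite /ent mxE inordK.
Qed.

Hypothesis arrA : arrangement A.
Hypothesis multA : atMost2Mult A [set: 'I_n.+1] N.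

Lemma required_mult_point a b : required a b ->
  onLine (cross (A' a) (A' b)) (A N) /\ multPt A [set: 'I_n.+1] (cross (A' a) (A' b)).
Proof.
have [A0 Anp] := arrA; move=> [ab abN].
have onN : onLine (cross (A' a) (A' b)) (A N) by apply/concurrent_dot_cross.
split=> //; split.
  by apply: cross_neq0; [apply: A0 | apply: Anp; rewrite (inj_eq (@lift_inj _ N))].
exists (lift N a), (lift N b), N; split; first by rewrite !inE.
split; first by rewrite (inj_eq (@lift_inj _ N)) !lift_max_neq.
by split; [apply: dot_crossl | split; [apply: dot_crossr |]].
Qed.

Lemma through_proportional a b c d :
  proportional (cross (A' a) (A' b)) (cross (A' c) (A' d)) -> through a b c /\ through a b d.
Proof.
by move=> abcd; split; apply/concurrent_dot_cross;
  apply: proportional_perp abcd _; rewrite ?dot_crossl ?dot_crossr.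
Qed.

Lemma required_two_points a b c d : required a b -> required c d ->
  ~ (through a b c /\ through a b d) ->
  forall i j, required i j -> (through a b i /\ through a b j) \/ (through c d i /\ through c d j).
Proof.
move=> rab rcd nabcd i j rij; apply: NNPP => nij; apply: multA.
have [onP mP] := required_mult_point rab; have [onQ mQ] := required_mult_point rcd.
have [onR mR] := required_mult_point rij.
exists (cross (A' a) (A' b)), (cross (A' c) (A' d)), (cross (A' i) (A' j)).
split; first by split.
split; first by split.
by split=> /through_proportional h; [apply: nabcd | apply: nij; right | apply: nij; left].
Qed.

Lemma exists_good_param : exists L, good_param L.
Proof.
have [[a [b rab]] | noreq] := classic (exists a b, required a b); last first.
  by exists (fun _ q => q); apply: good_param_free => i j rij; apply: noreq; exists i, j.
have [pencil | notpencil] :=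
  classic (forall i j, required i j -> through a b i /\ through a b j).
  by eexists; apply: good_param_pencil pencil.
have [c [d [rcd nabcd]]] : exists c d, required c d /\ ~ (through a b c /\ through a b d).
  apply: NNPP => none; apply: notpencil => i j rij; apply: NNPP => nij.
  by apply: none; exists i, j.
by eexists; apply: good_param_two_points (required_two_points rab rcd nabcd).
Qed.
End AddOneLine.

Theorem zdense_add_line (K : C -> Prop) n (A : 'I_n.+1 -> vec) :
  is_subfield K -> arrangement A -> atMost2Mult A [set: 'I_n.+1] ord_max ->
  zdense (RK K (incid (restr A))) (RC (incid (restr A))) ->
  zdense (RK K (incid A)) (RC (incid A)) /\ exists v, RK K (incid A) v.
Proof.
move=> subK arrA multA dense.
have [L Lgood] := exists_good_param subK arrA multA.
have RKdense := zdense_good_param subK Lgood dense.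
split=> //; apply: (zdense_nonempty RKdense (v := A)).
exact/RC_realizes/arrangement_realizes.
Qed.

Lemma arrangement_reindex k m (A : 'I_m -> vec) (g : 'I_k -> 'I_m) : injective g ->
  arrangement A -> arrangement (A \o g).
Proof.
by move=> gI [A0 Anp]; split=> [i | i j ij] /=; [apply: A0 | apply: Anp; rewrite (inj_eq gI)].
Qed.

Lemma atMost2Mult_reindex k m (A : 'I_m -> vec) (g : 'I_k -> 'I_m)
    (S : {set 'I_k}) (T : {set 'I_m}) (h : 'I_k) :
  injective g -> g @: S \subset T -> atMost2Mult A T (g h) -> atMost2Mult (A \o g) S h.
Proof.
move=> gI gST multA [p1 [p2 [p3 [onh [mult np]]]]]; apply: multA.
have multT p : multPt (A \o g) S p -> multPt A T p.
  move=> [p0 [i [j [l [[iS jS lS] [[ij jl il] onijl]]]]]]; split=> //.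
  exists (g i), (g j), (g l); rewrite !(inj_eq gI); split=> //.
  by split; apply: (subsetP gST); apply: imset_f.
exists p1, p2, p3; split; [exact: onh | split; [|exact: np]].
by case: mult => m1 m2 m3; split; apply: multT.
Qed.

Lemma ratK_subfield : is_subfield (@ratK C).
Proof.
split; first by exists 1; rewrite rmorph1.
split=> [x y [a ->] [b ->] | x y [a ->] [b ->] b0]; first by exists (a - b); rewrite rmorphB.
by exists (a / b); rewrite fmorph_div.
Qed.

Lemma zdense_RK_ord0 (K : C -> Prop) (I : {set 'I_0} -> Prop) : zdense (RK K I) (RC I).
Proof. by move=> p p0 v Xv; apply: p0; split=> // -[]. Qed.

Definition prefix m (A : 'I_m -> vec) k (km : (k <= m)%N) : 'I_k -> vec :=
  A \o widen_ord km.

Lemma widen_ord_inj m k (km : (k <= m)%N) : injective (widen_ord km).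
Proof. move=> i j eij; apply: val_inj; exact: (congr1 (@nat_of_ord m) eij). Qed.

Lemma restr_prefix m (A : 'I_m -> vec) k (km : (k.+1 <= m)%N) :
  restr (prefix A km) = prefix A (ltnW km).
Proof.
apply: functional_extensionality => i; congr A; apply: val_inj.
by rewrite /= /bump leqNgt ltn_ord.
Qed.

Lemma zdense_prefix (K : C -> Prop) m (B : 'I_m -> vec) : is_subfield K -> arrangement B ->
  (forall t : 'I_m, atMost2Mult B [set u : 'I_m | (u <= t)%N] t) ->
  forall k (km : (k <= m)%N), zdense (RK K (incid (prefix B km))) (RC (incid (prefix B km))).
Proof.
move=> subK arrB icB; elim=> [|k IHk] km; first exact: zdense_RK_ord0.
have := IHk (ltnW km); rewrite -(restr_prefix B km) => dense.
apply: (proj1 (zdense_add_line subK _ _ dense)).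
  exact: arrangement_reindex (@widen_ord_inj _ _ km) arrB.
apply: (atMost2Mult_reindex (T := [set u : 'I_m | (u <= k)%N])); first exact: widen_ord_inj.
  by apply/subsetP => _ /imsetP [t _ ->]; rewrite inE /= -ltnS.
by rewrite (_ : widen_ord km ord_max = Ordinal km); [apply: icB | apply: val_inj].
Qed.

Theorem ind_connected_realizable_rat m (A : 'I_m -> vec) :
  arrangement A -> ind_connected A -> exists v, RK (@ratK C) (incid A) v.
Proof.
move=> arrA [sigma icA]; pose B := A \o sigma.
have arrB : arrangement B := arrangement_reindex (@perm_inj _ sigma) arrA.
have icB (t : 'I_m) : atMost2Mult B [set u : 'I_m | (u <= t)%N] t.
  apply: atMost2Mult_reindex (icA t); first exact: perm_inj.
  by apply/subsetP => _ /imsetP [u ut ->]; apply: imset_f.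
have := zdense_prefix ratK_subfield arrB icB (km := leqnn m).
rewrite (_ : prefix B (leqnn m) = B) => [denseB|]; last first.
  by apply: functional_extensionality => i; congr B; apply: val_inj.
have [u [/RC_realizes uB Ku]] :=
  zdense_nonempty denseB (proj2 (RC_realizes _ _) (arrangement_realizes arrB)).
exists (u \o (sigma^-1)%g); split=> [|i]; last exact: Ku.
apply/RC_realizes; rewrite (_ : A = B \o (sigma^-1)%g).
  exact: realizes_reindex (@perm_inj _ _) uB.
by apply: functional_extensionality => i; rewrite /B /= permKV.
Qed.
End Configurations.

Theorem mainTheorem5 :
  (forall (C : numClosedFieldType) (K : C -> Prop), is_subfield K ->
   forall (n : nat) (A : 'I_n.+1 -> vec3 C),
     arrangement A ->
     atMost2Mult A [set: 'I_n.+1] ord_max ->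
     let A' := fun i : 'I_n => A (widen_ord (leqnSn n) i) in
     zdense (RK K (incid A')) (RC (incid A')) ->
     zdense (RK K (incid A)) (RC (incid A)) /\ exists v, RK K (incid A) v)
  /\
  (forall (C : numClosedFieldType) (m : nat) (A : 'I_m -> vec3 C),
     arrangement A -> ind_connected A ->
     exists v, RK (@ratK C) (incid A) v).
Proof.
split=> [C K subK n A arrA multA A' | C m A].
  by rewrite /A' -[fun i => _]/(A \o widen_ord (leqnSn n)) -restr_widen; exact: zdense_add_line.
exact: ind_connected_realizable_rat.
Qed.
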